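(* If $\mathcal{G}_1=([n],\mathcal{E}_1)$ and $\mathcal{G}_2=([n],\mathcal{E}_2)$ are simple plurigraphs with $Y_{\mathcal{G}_1}=Y_{\mathcal{G}_2}$, then $\mathcal{E}_1=\mathcal{E}_2$; that is, a simple plurigraph $\mathcal{G}$ can be reconstructed from $Y_{\mathcal{G}}$.
   Context: A graph $(V,E)$ has $E$ a multiset of unordered pairs of (not necessarily distinct) vertices. A plurigraph $\mathcal{G}=(V,\mathcal{E})$ has $\mathcal{E}$ a finite multiset of graphs $(V,E)$ on the vertex set $V$ with $E\neq\emptyset$. A proper coloring is $f:V\to\mathbb{P}=\{1,2,\dots\}$ such that every $(V,E)\in\mathcal{E}$ contains an edge $uv$ with $f(u)\ne f(v)$; for $V=[n]$, $Y_{\mathcal{G}}=\sum_f y_{f(1)}\cdots y_{f(n)}$ over proper colorings, in noncommuting variables $y_1,y_2,\dots$. For graphs $G_1,G_2$ on $V$, $G_1\prec G_2$ means every connected component of $G_1$ is contained in some connected component of $G_2$. $\mathcal{G}$ is a simple plurigraph if (i) for each $G\in\mathcal{E}$, every connected component of $G$ is a (simple, loopless) complete graph, and (ii) there do not exist two distinct members $G_1\ne G_2$ of $\mathcal{E}$ with $G_1\prec G_2$ (so in particular no pluriedge occurs twice). *)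

From mathcomp Require Import all_boot.
Set Implicit Arguments. Unset Strict Implicit. Unset Printing Implicit Defensive.

(* A graph on vertex set [n] = 'I_n: its edge multiset, given as the
   multiplicity of each unordered pair {u,v}, encoded as the set [set u; v]
   (a loop uu is the singleton [set u]). *)
Definition graph (n : nat) := {ffun {set 'I_n} -> nat}.

Definition is_graph n (G : graph n) : Prop :=
  forall e : {set 'I_n}, 0 < G e -> (0 < #|e|) && (#|e| <= 2).

(* a plurigraph on [n]: finite multiset (a seq, up to permutation) of graphs
   on [n], each with nonempty edge multiset *)
Definition plurigraph n := seq (graph n).

Definition is_plurigraph n (E : plurigraph n) : Prop :=
  forall G, G \in E -> is_graph G /\ exists e, 0 < G e.

Definition adj n (G : graph n) : rel 'I_n := fun u v => 0 < G [set u; v].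
Definition component n (G : graph n) (u : 'I_n) : {set 'I_n} :=
  [set v | connect (adj G) u v].

Definition prec n (G1 G2 : graph n) : Prop :=
  forall u, exists w, component G1 u \subset component G2 w.

(* every connected component of G is a simple loopless complete graph:
   each edge multiplicity is 1 exactly on pairs of distinct vertices lying
   in a common component, and 0 otherwise *)
Definition complete_components n (G : graph n) : Prop :=
  forall e : {set 'I_n},
    G e = ((#|e| == 2) && [forall u in e, forall v in e, connect (adj G) u v]) :> nat.

(* simple plurigraph; "distinct members" = distinct occurrences in the multiset *)
Definition simple_plurigraph n (E : plurigraph n) : Prop :=
  is_plurigraph E /\
  (forall G, G \in E -> complete_components G) /\
  (forall i j, i < size E -> j < size E -> i <> j ->
     ~ prec (nth [ffun => 0] E i) (nth [ffun => 0] E j)).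

Definition proper n (E : plurigraph n) (f : 'I_n -> nat) : bool :=
  all (fun G : graph n =>
         [exists e : {set 'I_n},
            (0 < G e) && [exists u in e, exists v in e, f u != f v]]) E.

(* Y_G, a formal series in noncommuting variables y_1, y_2, ...; represented
   by its coefficient function on words (monomials y_{w_1} ... y_{w_k}).
   The word y_{f(1)}...y_{f(n)} determines f, so the coefficient of a word w
   is 1 if w has length n, positive letters and f(i) := w_i is proper, else 0. *)
Definition Y n (E : plurigraph n) : seq nat -> nat := fun w =>
  ((size w == n) && all (fun c => 0 < c) w &&
   proper E (fun i : 'I_n => nth 0 w i)) : nat.

From Pilot Require Import Defs.
From mathcomp Require Import all_boot.
Set Implicit Arguments. Unset Strict Implicit. Unset Printing Implicit Defensive.

(* Colour every vertex by the connected component of a graph H containing it.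
   For a member G with complete components, this colouring leaves G improper
   exactly when every component of G lies inside a component of H; so Y_E,
   which records which colourings are proper, tells for every graph H whether
   some member of E is finer than H.  Starting from G in E1 we find H in E2
   finer than G and then G' in E1 finer than H; the antichain condition forces
   G' = G, so G and H have the same components and hence coincide.  The
   antichain condition also makes E1 and E2 duplicate-free, so equal supports
   give equal multisets. *)

Section SimplePlurigraph.
Variable n : nat.
Implicit Types (G H : graph n) (E : plurigraph n) (f : 'I_n -> nat).

Lemma eq_proper E f g : f =1 g -> Defs.proper E f = Defs.proper E g.
Proof.
move=> fg; apply: eq_all => G; apply: eq_existsb => e; congr (_ && _).
by apply: eq_existsb => u; rewrite fg; congr (_ && _); apply: eq_existsb => v; rewrite fg.
Qed.

Lemma Y_word_of_colouring E f : (forall i, 0 < f i) ->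
  Y E [seq f i | i <- enum 'I_n] = Defs.proper E f :> nat.
Proof.
move=> f_gt0; rewrite /Y size_map size_enum_ord eqxx all_map.
rewrite (@eq_all _ _ predT) ?all_predT => [|i]; last by rewrite /= f_gt0.
congr (nat_of_bool _); apply: eq_proper => i.
by rewrite (nth_map i) ?size_enum_ord ?ltn_ord // nth_ord_enum.
Qed.

Lemma proper_eq_of_Y E1 E2 f : Y E1 = Y E2 -> (forall i, 0 < f i) ->
  Defs.proper E1 f = Defs.proper E2 f.
Proof.
move=> eqY f_gt0; have := congr1 (fun F => F [seq f i | i <- enum 'I_n]) eqY.
by rewrite /= !Y_word_of_colouring //; do 2![case: Defs.proper].
Qed.

Lemma connect_adj_sym G : connect_sym (adj G).
Proof. by apply: sym_connect_sym => u v; rewrite /adj setUC. Qed.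

(* Shifted by one because colours must be positive. *)
Definition component_colouring G (i : 'I_n) : nat := (root (adj G) i).+1.

Lemma eq_component_colouring G u v :
  (component_colouring G u == component_colouring G v) = connect (adj G) u v.
Proof. by rewrite eqSS val_eqE (root_connect (@connect_adj_sym G)). Qed.

Definition splits G f : bool :=
  [exists e : {set 'I_n}, (0 < G e) && [exists u in e, exists v in e, f u != f v]].

Lemma splits_edge G f u v : adj G u v -> f u != f v -> splits G f.
Proof.
move=> uv fuv; apply/existsP; exists [set u; v]; rewrite -/(adj G u v) uv /=.
by apply/existsP; exists u; rewrite set21 /=; apply/existsP; exists v; rewrite set22.
Qed.

Lemma splitsP G f : complete_components G ->
  reflect (exists u v, connect (adj G) u v /\ f u != f v) (splits G f).
Proof.
move=> ccG; apply: (iffP idP) => [/existsP [e]|[u [v [/connectP [p]]]]].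
  rewrite ccG lt0b => /andP [/andP [_ /forallP conn_e]].
  case/existsP=> u /andP [ue /existsP [v /andP [ve fuv]]].
  by exists u, v; have /implyP/(_ ue)/forallP/(_ v)/implyP/(_ ve) := conn_e u.
elim: p u => [|x p IHp] u /=; first by move=> _ ->; rewrite eqxx.
case/andP=> ux px eq_v fuv.
have [fux | /(splits_edge ux)] := eqVneq (f u) (f x); last exact.
by rewrite fux in fuv; apply: IHp px eq_v fuv.
Qed.

Definition finer G H := subrel (connect (adj G)) (connect (adj H)).

Lemma splits_component_colouringF G H : complete_components G ->
  splits G (component_colouring H) = false <-> finer G H.
Proof.
move=> ccG; split=> [/negbT /(splitsP _ ccG) no_split u v Guv | GH].
  by rewrite -eq_component_colouring; apply/negPn/negP => neq; apply: no_split; exists u, v.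
apply/negbTE/(splitsP _ ccG) => -[u [v [/GH Huv]]].
by rewrite eq_component_colouring Huv.
Qed.

Lemma proper_component_colouringF E H : (forall G, G \in E -> complete_components G) ->
  Defs.proper E (component_colouring H) = false <-> exists2 G, G \in E & finer G H.
Proof.
move=> ccE; rewrite -[Defs.proper _ _]/(all (splits^~ _) E); split.
  move/negbT; rewrite -has_predC => /hasP [G GE /negbTE GHF].
  by exists G; last exact/(splits_component_colouringF _ (ccE G GE)).
case=> G GE /(splits_component_colouringF _ (ccE G GE)) GH.
by apply/negbTE; rewrite -has_predC; apply/hasP; exists G; rewrite //= GH.
Qed.

Lemma finer_prec G H : finer G H -> prec G H.
Proof. by move=> GH u; exists u; apply/subsetP => v; rewrite !inE; apply: GH. Qed.

Lemma finer_anti G H : complete_components G -> complete_components H ->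
  finer G H -> finer H G -> G = H.
Proof.
move=> ccG ccH GH HG; apply/ffunP => e; rewrite ccG ccH.
congr (nat_of_bool (_ && _)); apply: eq_forallb => u; congr (_ ==> _).
by apply: eq_forallb => v; congr (_ ==> _); apply/idP/idP => [/GH|/HG].
Qed.

Lemma simple_plurigraph_finer_eq E G G' : simple_plurigraph E ->
  G \in E -> G' \in E -> finer G' G -> G' = G.
Proof.
case=> _ [_ antichain] GE G'E G'G.
have [eq_index | neq_index] := eqVneq (index G' E) (index G E).
  by rewrite -(nth_index [ffun => 0] G'E) eq_index nth_index.
exfalso; apply: (antichain _ _ _ _ (elimN eqP neq_index)); rewrite ?index_mem //.
by rewrite !nth_index //; apply: finer_prec.
Qed.

Lemma simple_plurigraph_uniq E : simple_plurigraph E -> uniq E.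
Proof.
case=> _ [_ antichain]; apply/(uniqPn [ffun => 0]) => -[i [j [ij jE eq_ij]]].
have i_neq_j : i <> j by move/eqP; rewrite ltn_eqF.
apply: (antichain i j (ltn_trans ij jE) jE i_neq_j).
by rewrite eq_ij; apply: finer_prec.
Qed.

Lemma simple_plurigraph_mem E1 E2 G :
  simple_plurigraph E1 -> simple_plurigraph E2 ->
  (forall f, (forall i, 0 < f i) -> Defs.proper E1 f = Defs.proper E2 f) ->
  G \in E1 -> G \in E2.
Proof.
move=> s1 s2 eq_proper12 GE1; have [_ [cc1 _]] := s1; have [_ [cc2 _]] := s2.
have [H HE2 HG] : exists2 H, H \in E2 & finer H G.
  by apply/(proper_component_colouringF _ cc2); rewrite -eq_proper12 //;
    apply/(proper_component_colouringF _ cc1); exists G.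
have [G' G'E1 G'H] : exists2 G', G' \in E1 & finer G' H.
  by apply/(proper_component_colouringF _ cc1); rewrite eq_proper12 //;
    apply/(proper_component_colouringF _ cc2); exists H.
have eqG' : G' = G by apply: (simple_plurigraph_finer_eq s1) => // u v /G'H /HG.
have GH : finer G H by rewrite -eqG'.
by rewrite (finer_anti (cc1 G GE1) (cc2 H HE2) GH HG).
Qed.

End SimplePlurigraph.

Theorem proposition4p1 (n : nat) (E1 E2 : plurigraph n) :
  simple_plurigraph E1 -> simple_plurigraph E2 ->
  Y E1 = Y E2 -> perm_eq E1 E2.
Proof.
move=> s1 s2 eqY; apply: uniq_perm; try exact: simple_plurigraph_uniq.
move=> G; apply/idP/idP; apply: simple_plurigraph_mem => // f f_gt0.
  exact: proper_eq_of_Y.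
by symmetry; apply: proper_eq_of_Y.
Qed.
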